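(* Let $\mathfrak{R}=(G,G',S,\phi,\rho,\delta)$ be a reconciliation, $s\in V(S)\setminus L(S)$, and $x\in V(G')\setminus L(G')$ with $\rho(x)=s$. Then $x\in\Sigma(\mathfrak{R})$ if and only if $x$ is a minimal element of $\rho^{-1}(s)$ (with respect to the ancestor order of $G'$).
   Context: All trees are rooted binary trees whose root node has degree 1; every other non-leaf node $x$ has exactly two children $x_l,x_r$; $L(T)$ denotes leaves (root excluded). For nodes of a rooted tree, $y\le x$ means $x$ lies on the path from $y$ to the root. $G$ is a gene tree, $S$ a species tree, $\phi:L(G)\to L(S)$. A tree $G'$ is an extension of $G$ if $G$ is obtained from $G'$ by pruning some subtrees and suppressing degree-2 nodes. A map $\rho:V(G')\to V(S)$ is consistent with $S$ if $\rho(root(G'))=root(S)$ and every node $x$ of $G'$ with two children satisfies (D) $\rho(x)=\rho(x_l)=\rho(x_r)$ or (S) $\rho(x)_l=\rho(x_l)$ and $\rho(x)_r=\rho(x_r)$. A reconciliation $\mathfrak{R}=(G,G',S,\phi,\rho,\delta)$ consists of an extension $G'$ of $G$, a consistent $\rho$ with $\rho|_{L(G)}=\phi$, and an injective partial function $\delta$ from duplications to losses ($L(G')\setminus L(G)$) with $\rho(x)=\rho(\delta(x))$. $\Delta(\mathfrak{R})$ (duplications) is the set of nodes with two children satisfying (D), $\Sigma(\mathfrak{R})$ (speciations) those satisfying (S). *)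

From mathcomp Require Import all_boot.
Set Implicit Arguments. Unset Strict Implicit. Unset Printing Implicit Defensive.

(* A tree T is represented by a term  t : btree A  (the binary part); the    *)
(* planted root (of degree 1) sits above it.  Vertices are                   *)
(*   None          : the planted root  root(T)                               *)
(*   Some p        : the vertex reached from the top of t by the path p      *)
(*                   (false = left child x_l, true = right child x_r).      *)

Inductive btree (A : Type) : Type :=
| BLeaf of A
| BNode of btree A & btree A.
Arguments BLeaf {A}.
Arguments BNode {A}.

Definition pnode := option (seq bool).

Fixpoint subtree {A} (t : btree A) (p : seq bool) : option (btree A) :=
  match p with
  | [::] => Some t
  | b :: p' => match t with
               | BLeaf _ => None
               | BNode l r => subtree (if b then r else l) p'
               end
  end.

Definition is_vertex {A} (t : btree A) (v : pnode) : bool :=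
  match v with None => true | Some p => isSome (subtree t p) end.

Definition is_leaf {A} (t : btree A) (v : pnode) : bool :=
  match v with
  | None => false
  | Some p => if subtree t p is Some (BLeaf _) then true else false
  end.

Definition leaf_label {A} (t : btree A) (v : pnode) : option A :=
  match v with
  | None => None
  | Some p => if subtree t p is Some (BLeaf a) then Some a else None
  end.

Definition two_children {A} (t : btree A) (v : pnode) : bool :=
  match v with
  | None => false
  | Some p => if subtree t p is Some (BNode _ _) then true else false
  end.

(* left and right child x_l, x_r (meaningful for vertices with two children) *)
Definition lchild (v : pnode) : pnode :=
  match v with None => None | Some p => Some (rcons p false) end.
Definition rchild (v : pnode) : pnode :=
  match v with None => None | Some p => Some (rcons p true) end.

(* ancestor order:  anc_le y x  <->  y <= x  <->  x lies on the path from y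
   to the root *)
Definition anc_le (y x : pnode) : bool :=
  match x, y with
  | None, _ => true
  | Some _, None => false
  | Some px, Some py => prefix px py
  end.

Fixpoint leaves {A} (t : btree A) : seq A :=
  match t with
  | BLeaf a => [:: a]
  | BNode l r => leaves l ++ leaves r
  end.

(* Extensions.  The leaves of G' labelled  Some a  are the leaves a of G;    *)
(* the leaves labelled None are the additional leaves L(G') \ L(G).          *)
(* extends G' G : G is obtained from G' by pruning subtrees (all of whose    *)
(* leaves are outside L(G)) and suppressing the resulting degree-2 nodes.    *)

Definition prunable {A : eqType} (t : btree (option A)) : bool :=
  all (fun o => o == None) (leaves t).

Inductive extends {A : eqType} : btree (option A) -> btree A -> Prop :=
| ext_leaf a : extends (BLeaf (Some a)) (BLeaf a)
| ext_node l r l0 r0 :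
    extends l l0 -> extends r r0 -> extends (BNode l r) (BNode l0 r0)
| ext_prune_r l r t0 :
    extends l t0 -> prunable r -> extends (BNode l r) t0
| ext_prune_l l r t0 :
    extends r t0 -> prunable l -> extends (BNode l r) t0.

Definition dup_cond (rho : pnode -> pnode) (x : pnode) : Prop :=
  rho x = rho (lchild x) /\ rho x = rho (rchild x).

Definition spec_cond {B} (S : btree B) (rho : pnode -> pnode) (x : pnode) : Prop :=
  two_children S (rho x) /\
  rchild (rho x) = rho (rchild x) /\ lchild (rho x) = rho (lchild x).

Definition consistent {A B} (G' : btree A) (S : btree B) (rho : pnode -> pnode) : Prop :=
  rho None = None /\
  (forall v, is_vertex G' v -> is_vertex S (rho v)) /\
  (forall x, two_children G' x -> dup_cond rho x \/ spec_cond S rho x).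

Definition is_dup {A} (G' : btree A) (rho : pnode -> pnode) (x : pnode) : Prop :=
  two_children G' x /\ dup_cond rho x.
Definition is_spec {A B} (G' : btree A) (S : btree B) (rho : pnode -> pnode) (x : pnode) : Prop :=
  two_children G' x /\ spec_cond S rho x.

Definition is_loss {A} (G' : btree (option A)) (v : pnode) : Prop :=
  is_leaf G' v /\ leaf_label G' v = Some None.

(* Reconciliation R = (G, G', S, phi, rho, delta).  Gene leaves are named by
   their (distinct) labels a : A; phi a is the species leaf assigned to a. *)
Definition reconciliation {A : eqType} {B}
    (G : btree A) (G' : btree (option A)) (S : btree B)
    (phi : A -> pnode) (rho : pnode -> pnode) (delta : pnode -> option pnode) : Prop :=
  uniq (leaves G) /\
  (forall a, a \in leaves G -> is_leaf S (phi a)) /\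
  extends G' G /\
  consistent G' S rho /\
  (forall v a, is_leaf G' v -> leaf_label G' v = Some (Some a) -> rho v = phi a) /\
  (forall x y, delta x = Some y ->
     [/\ is_vertex G' x, is_dup G' rho x, is_loss G' y & rho x = rho y]) /\
  (forall x1 x2 y, delta x1 = Some y -> delta x2 = Some y -> x1 = x2).

Definition minimal_in (P : pnode -> Prop) (x : pnode) : Prop :=
  P x /\ forall y, P y -> anc_le y x -> y = x.

From mathcomp Require Import all_boot.

(* A consistent map rho is monotone for the ancestor order, and at a
   speciation x the children of x are sent to the children of s = rho x,
   which lie strictly below s; hence no proper descendant of x is mapped to s.
   At a duplication, on the contrary, the child x_l is a proper descendant of
   x with rho x_l = s, so x is not minimal in rho^-1(s). *)

Definition child (b : bool) (v : pnode) : pnode :=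
  if b then rchild v else lchild v.

Lemma child_Some b p : child b (Some p) = Some (rcons p b).
Proof. by case: b. Qed.

Lemma child_neq b p : child b (Some p) <> Some p.
Proof. by rewrite child_Some => -[/(congr1 size)]; rewrite size_rcons => /esym/n_Sn. Qed.

Lemma anc_le_refl v : anc_le v v.
Proof. by case: v => //= p; apply: prefix_refl. Qed.

Lemma anc_le_trans x y z : anc_le x y -> anc_le y z -> anc_le x z.
Proof.
case: z => [pz|] //; case: y => [py|] //; case: x => [px|] //=.
by move=> le_xy le_yz; apply: prefix_trans le_yz le_xy.
Qed.

Lemma anc_le_child b v : anc_le (child b v) v.
Proof. by case: v => [p|] //; rewrite child_Some /= prefix_rcons. Qed.

Lemma anc_le_childN {A} (t : btree A) v b :
  two_children t v -> ~~ anc_le v (child b v).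
Proof.
case: v => [p|] // _; rewrite child_Some /=; apply/negP => /size_prefix.
by rewrite size_rcons ltnn.
Qed.

Lemma anc_le_Some y p :
  anc_le y (Some p) -> y = Some p \/ exists b, anc_le y (child b (Some p)).
Proof.
case: y => [q|] //= /prefixP [[|b r] ->]; first by rewrite cats0; left.
by right; exists b; rewrite child_Some /= -cat_rcons prefix_prefix.
Qed.

Lemma subtree_cat {A} (t : btree A) p q :
  subtree t (p ++ q) = obind (subtree^~ q) (subtree t p).
Proof. by elim: p t => [|b p IH] [a|l r] //=; case: q. Qed.

Lemma is_vertex_cat_two_children {A} (t : btree A) p b r :
  is_vertex t (Some (p ++ b :: r)) -> two_children t (Some p).
Proof.
rewrite /= -cat_rcons subtree_cat -cats1 subtree_cat.
by case: (subtree t p) => [[a|l r']|] //=; case: b.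
Qed.

Lemma two_children_vertex_child {A} (t : btree A) b v :
  two_children t v -> is_vertex t (child b v).
Proof.
case: v => [p|] //; rewrite child_Some /= -cats1 subtree_cat.
by case: (subtree t p) => [[a|l r]|] //=; case: b => /=; [case: r | case: l].
Qed.

Lemma inner_vertex_two_children {A} (t : btree A) p :
  is_vertex t (Some p) -> ~~ is_leaf t (Some p) -> two_children t (Some p).
Proof. by rewrite /=; case: (subtree t p) => [[a|l r]|]. Qed.

Lemma dup_cond_child {rho x} b : dup_cond rho x -> rho (child b x) = rho x.
Proof. by case=> eq_l eq_r; case: b. Qed.

Lemma spec_cond_child {B} {S : btree B} {rho x} b :
  spec_cond S rho x -> rho (child b x) = child b (rho x).
Proof. by case=> _ [eq_r eq_l]; case: b. Qed.

Section ConsistentMap.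

Context {A B : Type} {G' : btree A} {S : btree B} {rho : pnode -> pnode}.
Hypothesis rho_consistent : consistent G' S rho.

Lemma consistent_anc_le_child x b :
  two_children G' x -> anc_le (rho (child b x)) (rho x).
Proof.
case: rho_consistent => _ [_ events].
case/events => [/dup_cond_child dup | /spec_cond_child spec].
- by rewrite dup anc_le_refl.
- by rewrite spec anc_le_child.
Qed.

Lemma consistent_anc_le y x :
  is_vertex G' y -> anc_le y x -> anc_le (rho y) (rho x).
Proof.
case: x => [p|]; last by case: rho_consistent => ->.
case: y => [q|] // vq /prefixP [r eq_q]; subst q.
elim: r p vq => [|b r IH] p vq; first by rewrite cats0 anc_le_refl.
have two_p : two_children G' (Some p) by apply: is_vertex_cat_two_children vq.
rewrite -cat_rcons in vq *; apply: anc_le_trans (IH _ vq) _.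
by rewrite -child_Some consistent_anc_le_child.
Qed.

End ConsistentMap.

Theorem lemma3 (A : eqType) (B : Type)
    (G : btree A) (G' : btree (option A)) (S : btree B)
    (phi : A -> pnode) (rho : pnode -> pnode) (delta : pnode -> option pnode)
    (s x : pnode) :
  reconciliation G G' S phi rho delta ->
  is_vertex S s -> ~~ is_leaf S s ->
  is_vertex G' x -> ~~ is_leaf G' x -> x <> None ->
  rho x = s ->
  (is_spec G' S rho x <->
   minimal_in (fun y => is_vertex G' y /\ rho y = s) x).
Proof.
move=> [_ [_ [_ [rho_cons _]]]] _ _; case: x => [p|] // vp leaf_p _ rho_p.
have two_p : two_children G' (Some p) by apply: inner_vertex_two_children.
split=> [[_ spec] | [_ minimal]].
- split=> // y [vy rho_y] /anc_le_Some [//|[b le_y]].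
  have := consistent_anc_le rho_cons _ _ vy le_y.
  rewrite rho_y (spec_cond_child b spec) -rho_p.
  by case: spec => /(anc_le_childN _ _ b)/negP.
- case: rho_cons => _ [_ /(_ _ two_p) [dup|//]]; exfalso.
  apply: (@child_neq false p); apply: minimal; last exact: anc_le_child.
  by rewrite (dup_cond_child _ dup) two_children_vertex_child.
Qed.
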